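(* Let $k>d$, let $\mathbf X\in\mathbb R^{k\times d}$ have full column rank $d$ and rows $\mathbf x_i^\top$, and let $\mathbf y\in\mathbb R^k$. Then $\mathbf X^+\mathbf y=\sum_{i=1}^k\dfrac{\det(\mathbf X_{-i}^\top\mathbf X_{-i})}{(k-d)\det(\mathbf X^\top\mathbf X)}\,\mathbf X_{-i}^+\mathbf y_{-i}$, where $\mathbf X_{-i}$ is $\mathbf X$ with its $i$-th row removed, $\mathbf y_{-i}$ is $\mathbf y$ with its $i$-th entry removed, and $^+$ denotes the Moore–Penrose pseudoinverse. *)

From HB Require Import structures.
From mathcomp Require Import all_boot all_order all_algebra.
Set Implicit Arguments. Unset Strict Implicit. Unset Printing Implicit Defensive.
Import Order.TTheory GRing.Theory Num.Theory.
Local Open Scope ring_scope.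

(* B is the Moore--Penrose pseudoinverse of A (the four Penrose conditions;
   over a real field the conjugate transpose is the transpose). *)
Definition is_pinv (R : realFieldType) (m n : nat)
  (A : 'M[R]_(m, n)) (B : 'M[R]_(n, m)) : Prop :=
  [/\ A *m B *m A = A, B *m A *m B = B,
      (A *m B)^T = A *m B & (B *m A)^T = B *m A].

(* Write A := X^T X, P := A^-1 and b := X^T y, so that X^+ y = P b.  Deleting row
   x_i is a rank-one downdate A - x_i x_i^T, whose determinant is
   det A * (1 - h_i) with h_i = x_i^T P x_i the leverage of row i, and whose
   inverse is given by Sherman--Morrison.  Hence each weighted term equals
   (1 - h_i) P b - P x_i y_i + P x_i x_i^T P b, up to the factor 1/(k - d).
   Summing over i, the leverages add up to tr (P A) = d, while both
   sum_i P x_i y_i and sum_i P x_i x_i^T P b equal P b, so the sum is P b. *)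
From HB Require Import structures.
From mathcomp Require Import all_boot all_order all_algebra.
Import Order.TTheory GRing.Theory Num.Theory.
Local Open Scope ring_scope.
Set Implicit Arguments. Unset Strict Implicit.

Lemma trmx_mul_rows (R : comPzRingType) m p q (M : 'M[R]_(m, p)) (N : 'M[R]_(m, q)) :
  M^T *m N = \sum_(j < m) (row j M)^T *m row j N.
Proof.
apply/matrixP => a b; rewrite !mxE summxE; apply: eq_bigr => j _.
by rewrite !mxE big_ord1 !mxE.
Qed.

Lemma trmx_mul_row' (R : comPzRingType) m p q (i : 'I_m.+1)
    (M : 'M[R]_(m.+1, p)) (N : 'M[R]_(m.+1, q)) :
  (row' i M)^T *m row' i N = M^T *m N - (row i M)^T *m row i N.
Proof.
rewrite (trmx_mul_rows (row' i M)) (trmx_mul_rows M) (bigD1_ord i) //= addrC addrK.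
by apply: eq_bigr => j _; congr (_^T *m _); apply/rowP => c; rewrite !mxE.
Qed.

(* The matrix determinant lemma, via the two block factorisations of
   [[1, u], [v^T, 1]]. *)
Lemma det_1_sub_rank1 (R : comPzRingType) d (u v : 'cV[R]_d) :
  \det (1%:M - u *m v^T) = 1 - (v^T *m u) 0 0.
Proof.
have E1 : block_mx 1%:M u v^T 1%:M =
    block_mx 1%:M 0 v^T 1%:M *m block_mx 1%:M u 0 (1%:M - v^T *m u) :> 'M[R]_(d + 1).
  by rewrite mulmx_block ?mul1mx ?mulmx1 ?mul0mx ?mulmx0 ?addr0 ?add0r
             ?(addrC (v^T *m u)) ?subrK.
have E2 : block_mx 1%:M u v^T 1%:M =
    block_mx 1%:M u 0 1%:M *m block_mx (1%:M - u *m v^T) 0 v^T 1%:M :> 'M[R]_(d + 1).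
  by rewrite mulmx_block ?mul1mx ?mulmx1 ?mul0mx ?mulmx0 ?addr0 ?add0r ?subrK.
have := congr1 determinant (etrans (esym E1) E2).
rewrite !det_mulmx !det_ublock !det_lblock !det1 ?mul1r ?mulr1 => <-.
by rewrite [X in \det X]mx11_scalar !mxE det_scalar1 eqxx.
Qed.

Section PseudoInverse.

Variables (R : realFieldType) (m n : nat) (A : 'M[R]_(m, n)) (B : 'M[R]_(n, m)).
Hypothesis hB : is_pinv A B.

Lemma pinv_normal_eq : A^T *m A *m B = A^T.
Proof. by case: hB => h1 _ h3 _; rewrite -mulmxA -h3 -trmx_mul h1. Qed.

Lemma pinv_gram : B *m B^T *m A^T = B.
Proof. by case: hB => _ h2 h3 _; rewrite -mulmxA -trmx_mul h3 mulmxA h2. Qed.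

Lemma pinv_mulmx_full_col_rank : \rank A = n -> B *m A = 1%:M.
Proof.
move=> rankA; case: hB => h1 _ _ _.
have freeAt : row_free A^T by rewrite /row_free mxrank_tr rankA.
apply: trmx_inj; apply: (row_free_inj freeAt).
by rewrite trmx1 mul1mx -trmx_mul mulmxA h1.
Qed.

Lemma pinv_gram_mulmx : \rank A = n -> B *m B^T *m (A^T *m A) = 1%:M.
Proof. by move=> rankA; rewrite mulmxA pinv_gram pinv_mulmx_full_col_rank. Qed.

End PseudoInverse.

Definition leverage (R : pzRingType) d (P : 'M[R]_d) (r : 'rV[R]_d) : R :=
  (r *m P *m r^T) 0 0.

Section RankOneDowndate.

Variables (R : fieldType) (d : nat) (P A : 'M[R]_d) (r : 'rV[R]_d).
Hypothesis hPA : P *m A = 1%:M.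

Let h := leverage P r.

Lemma mulmx_rank1_sandwich p (M : 'M[R]_(1, p)) :
  P *m r^T *m r *m P *m (r^T *m M) = h *: (P *m r^T *m M).
Proof.
rewrite !mulmxA -(mulmxA (P *m r^T) r P) -(mulmxA (P *m r^T) (r *m P) r^T).
by rewrite {1}[r *m P *m r^T]mx11_scalar mul_mx_scalar -scalemxAl.
Qed.

Lemma det_rank1_downdate : \det (A - r^T *m r) = \det A * (1 - h).
Proof.
have -> : A - r^T *m r = (1%:M - r^T *m (P^T *m r^T)^T) *m A.
  by rewrite mulmxBl mul1mx trmx_mul !trmxK -mulmxA -(mulmxA r) hPA mulmx1.
by rewrite det_mulmx det_1_sub_rank1 trmx_mul !trmxK mulrC.
Qed.

(* Sherman--Morrison, cleared of the denominator 1 - h so that it also holds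
   when the downdate is singular. *)
Lemma sherman_morrison_mulmx :
  ((1 - h) *: P + P *m r^T *m r *m P) *m (A - r^T *m r) = (1 - h) *: 1%:M.
Proof.
rewrite mulmxDl -scalemxAl !mulmxBr hPA mulmx_rank1_sandwich.
rewrite -(mulmxA _ P A) hPA mulmx1 !mulmxA.
by rewrite scalerBr !scalerBl !scale1r subrK.
Qed.

Lemma rank1_downdate_solve (b z : 'cV[R]_d) (s : 'M[R]_1) :
  (A - r^T *m r) *m z = b - r^T *m s ->
  (1 - h) *: z = (1 - h) *: (P *m b) - P *m r^T *m s + P *m r^T *m r *m P *m b.
Proof.
move=> hz; rewrite -[z]mul1mx scalemxAl -sherman_morrison_mulmx -mulmxA hz.
rewrite mulmxDl -scalemxAl !mulmxBr mulmx_rank1_sandwich mulmxA.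
rewrite scalerBr !scalerBl !scale1r opprB -!addrA; congr (_ + (_ + _)).
by rewrite addrC !addrA subrK.
Qed.

End RankOneDowndate.

Lemma sum_leverage (R : fieldType) k d (X : 'M[R]_(k, d)) (P : 'M[R]_d) :
  P *m (X^T *m X) = 1%:M -> \sum_(i < k) leverage P (row i X) = d%:R.
Proof.
move=> hPA; transitivity (\tr (\sum_(i < k) (row i X)^T *m row i X *m P)).
  rewrite raddf_sum; apply: eq_bigr => i _ /=.
  by rewrite /leverage -(mulmxA (row i X)^T) mxtrace_mulC /mxtrace big_ord1.
by rewrite -mulmx_suml -trmx_mul_rows mxtrace_mulC hPA mxtrace1.
Qed.

Lemma det_scale_loo_pinv (R : realFieldType) k d (i : 'I_k.+1)
    (X : 'M[R]_(k.+1, d)) (y : 'cV[R]_k.+1) (P : 'M[R]_d) (Xi : 'M[R]_(d, k)) :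
  P *m (X^T *m X) = 1%:M -> is_pinv (row' i X) Xi ->
  let r := row i X in let b := X^T *m y in
  \det ((row' i X)^T *m row' i X) *: (Xi *m row' i y) =
  \det (X^T *m X) *: ((1 - leverage P r) *: (P *m b) - P *m r^T *m row i y
                      + P *m r^T *m r *m P *m b).
Proof.
move=> hPA hXi r b; rewrite {}/r {}/b.
rewrite trmx_mul_row' (det_rank1_downdate _ hPA) -scalerA.
congr (_ *: _); apply: (rank1_downdate_solve hPA).
by rewrite -!trmx_mul_row' mulmxA (pinv_normal_eq hXi).
Qed.

Theorem lemma2 (R : realFieldType) (n d : nat) (hkd : (d < n.+1)%N)
  (X : 'M[R]_(n.+1, d)) (hrank : \rank X = d) (y : 'cV[R]_(n.+1))
  (Xp : 'M[R]_(d, n.+1)) (hXp : is_pinv X Xp)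
  (Xps : forall i : 'I_n.+1, 'M[R]_(d, n))
  (hXps : forall i : 'I_n.+1, is_pinv (row' i X) (Xps i)) :
  Xp *m y =
  \sum_(i < n.+1)
     (\det ((row' i X)^T *m row' i X)
        / ((n.+1 - d)%:R * \det (X^T *m X))) *: (Xps i *m row' i y).
Proof.
set P := Xp *m Xp^T; set b := X^T *m y; pose r i := row i X.
have hPA : P *m (X^T *m X) = 1%:M by apply: pinv_gram_mulmx.
have hdA : \det (X^T *m X) != 0.
  apply: contra_eq_neq _ (congr1 determinant hPA) => hA0.
  by rewrite det_mulmx hA0 mulr0 det1 eq_sym oner_neq0.
have hc : (n.+1 - d)%:R != 0 :> R by rewrite pnatr_eq0 -lt0n subn_gt0.
have sum_P_r_y : \sum_(i < n.+1) P *m (r i)^T *m row i y = P *m b.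
  by rewrite /b trmx_mul_rows mulmx_sumr; apply: eq_bigr => i _; rewrite mulmxA.
have sum_P_r_r_P_b : \sum_(i < n.+1) P *m (r i)^T *m r i *m P *m b = P *m b.
  transitivity (\sum_(i < n.+1) P *m ((r i)^T *m r i) *m (P *m b)).
    by apply: eq_bigr => i _; rewrite !mulmxA.
  by rewrite -mulmx_suml -mulmx_sumr -trmx_mul_rows mulmxA hPA mul1mx.
have sum_1_sub_leverage : \sum_(i < n.+1) (1 - leverage P (r i)) = (n.+1 - d)%:R.
  by rewrite sumrB sum_leverage // sumr_const card_ord natrB // ltnW.
under eq_bigr => i _ do
  rewrite invfM mulrC -scalerA (det_scale_loo_pinv y hPA (hXps i)) scalerA mulfVK //.
rewrite -scaler_sumr big_split /= sumrB -scaler_suml.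
rewrite sum_1_sub_leverage sum_P_r_y sum_P_r_r_P_b subrK scalerA mulVf // scale1r.
by rewrite -(pinv_gram hXp) -mulmxA.
Qed.
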